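(* Let $s\ge 1$, $m=\lfloor (s+1)/2\rfloor$, let $A=(a_{ij})$ be a real $s\times s$ matrix and $b\in\mathbb{R}^s$ with $b_i>0$ for all $i$, satisfying (i) $b_i a_{ij}+b_j a_{ji}-b_ib_j=0$ for $1\le i,j\le s$, and (ii) $b_{s+1-i}=b_i$ for $1\le i\le s$ and $b_j=a_{s+1-i,s+1-j}+a_{ij}$ for $1\le i,j\le s$. Let $B=\mathrm{diag}(b_1,\dots,b_s)$, $e_s=(1,\dots,1)^T\in\mathbb{R}^s$, and $\bar A=(\bar a_{ij})$ with $\bar a_{ij}=a_{ij}-b_j/2$. Let $P=(P_1\ P_2)$ be the orthogonal $s\times s$ matrix, with $P_1$ of size $s\times m$ and $P_2$ of size $s\times(s-m)$, such that for $x\in\mathbb{R}^s$, $P_1^Tx=(y_1,\dots,y_m)^T$ and $P_2^Tx=(y_{m+1},\dots,y_s)^T$, where $y_i=\tfrac{\sqrt2}{2}(x_{s+1-i}+x_i)$ for $1\le i\le\lfloor s/2\rfloor$, $y_m=x_m$ if $s$ is odd, and $y_i=\tfrac{\sqrt2}{2}(x_{s+1-i}-x_i)$ for $m+1\le i\le s$. Let $K=P_1^TB^{1/2}\bar AB^{-1/2}P_2\in\mathbb{R}^{m\times(s-m)}$ and let $K=UDV^T$ be a singular value decomposition, with $U\in\mathbb{R}^{m\times m}$, $V\in\mathbb{R}^{(s-m)\times(s-m)}$ orthogonal and $D\in\mathbb{R}^{m\times(s-m)}$ having diagonal entries $D_{ii}=\sigma_i\ge0$ ($1\le i\le s-m$)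 and zeros elsewhere; if $s$ is odd set $\sigma_m=0$. Let $Q_1=B^{-1/2}P_1U$, $Q_2=B^{-1/2}P_2V$, and $(\alpha_1,\dots,\alpha_m)^T=Q_1^TBe_s$. Let $h\in\mathbb{R}$, $J\in\mathbb{R}^{d\times d}$ and $r\in\mathbb{R}^{sd}$. Assume the matrices $I_d+h^2\sigma_i^2J^2$ ($1\le i\le m$) are invertible and that $$M=I_d-J\,\frac h2\sum_{i=1}^m\alpha_i^2\,(I_d+h^2\sigma_i^2J^2)^{-1}$$ is invertible. Define $R=(Q_1^TB\otimes I_d)\,r+h\,(DQ_2^TB\otimes J)\,r\in\mathbb{R}^{md}$ with blocks $R_1,\dots,R_m\in\mathbb{R}^d$; define $\Delta z\in\mathbb{R}^d$ as the solution of $M\,\Delta z=h\,J\sum_{i=1}^m\alpha_i(I_d+h^2\sigma_i^2J^2)^{-1}R_i$; define $W_i=(I_d+h^2\sigma_i^2J^2)^{-1}\big(R_i+\tfrac{\alpha_i}{2}\Delta z\big)$ for $1\le i\le m$ and $W'=(W_1^T,\dots,W_m^T)^T$; define $W''=-h\,(D^T\otimes J)\,W'+(Q_2^TB\otimes I_d)\,r\in\mathbb{R}^{(s-m)d}$; and set $\Delta Y=(Q_1\otimes I_d)W'+(Q_2\otimes I_d)W''$. Then $\Delta Y$ is the unique solution of the linear system $$\left(I_s\otimes I_d-h\,A\otimes J\right)\Delta Y=r .$$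
   Context: $A,b$ are the coefficients of an $s$-stage implicit Runge–Kutta scheme; condition (i) is symplecticity and (ii) is symmetry (e.g. Gauss collocation methods satisfy both). $\otimes$ denotes the Kronecker product, and $B^{\pm1/2}$ denote the diagonal matrices with entries $b_i^{\pm1/2}$. The system $(I_s\otimes I_d-hA\otimes J)\Delta Y=r$ is the simplified linear system arising in simplified Newton iterations for the stage equations. *)

From mathcomp Require Import all_boot all_order all_algebra.
From mathcomp Require Export mxtens.
Set Implicit Arguments. Unset Strict Implicit. Unset Printing Implicit Defensive.
Import Order.TTheory GRing.Theory Num.Theory.
Local Open Scope ring_scope.

(* Indices are 0-based: paper index i (1..s) corresponds to ordinal i-1;
   paper index s+1-i corresponds to rev_ord.  The Kronecker product is
   mxtens's [tensmx] (row index (i,k) |-> i*d+k), so block i of a vector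
   in R^{md} consists of entries i*d .. i*d+d-1. *)

Section RKDefs.
Variable R : rcfType.

Definition mhalf (s : nat) : nat := (s.+1)./2.

(* Entry (i,j) (0-based) of P^T, where P^T x = y as in the paper. *)
Definition PTentry (s i j : nat) : R :=
  let c : R := Num.sqrt 2 / 2 in
  if (i < s./2)%N then c * ((j == (s.-1 - i)%N)%:R + (j == i)%:R)
  else if (i < mhalf s)%N then (j == i)%:R
  else c * ((j == (s.-1 - i)%N)%:R - (j == i)%:R).

Definition P1T (s : nat) : 'M[R]_(mhalf s, s) := \matrix_(i, j) PTentry s i j.
Definition P2T (s : nat) : 'M[R]_(s - mhalf s, s) :=
  \matrix_(i, j) PTentry s (mhalf s + i) j.
Definition P1 (s : nat) : 'M[R]_(s, mhalf s) := (P1T s)^T.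
Definition P2 (s : nat) : 'M[R]_(s, s - mhalf s) := (P2T s)^T.

Definition Bmx s (b : 'I_s -> R) : 'M[R]_s := diag_mx (\row_i b i).
Definition Bsqrt s (b : 'I_s -> R) : 'M[R]_s := diag_mx (\row_i Num.sqrt (b i)).
Definition Bisqrt s (b : 'I_s -> R) : 'M[R]_s :=
  diag_mx (\row_i (Num.sqrt (b i))^-1).

Definition Abar s (A : 'M[R]_s) (b : 'I_s -> R) : 'M[R]_s :=
  \matrix_(i, j) (A i j - b j / 2).

Definition Kmx s (A : 'M[R]_s) (b : 'I_s -> R) : 'M[R]_(mhalf s, s - mhalf s) :=
  P1T s *m Bsqrt b *m Abar A b *m Bisqrt b *m P2 s.

Definition Dmx s (sigma : 'I_(mhalf s) -> R) : 'M[R]_(mhalf s, s - mhalf s) :=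
  \matrix_(i, j) (if (i : nat) == j then sigma i else 0).

Definition Q1 s (b : 'I_s -> R) (U : 'M[R]_(mhalf s)) : 'M[R]_(s, mhalf s) :=
  Bisqrt b *m P1 s *m U.
Definition Q2 s (b : 'I_s -> R) (V : 'M[R]_(s - mhalf s)) : 'M[R]_(s, s - mhalf s) :=
  Bisqrt b *m P2 s *m V.

Definition alpha s (b : 'I_s -> R) (U : 'M[R]_(mhalf s)) : 'cV[R]_(mhalf s) :=
  (Q1 b U)^T *m Bmx b *m const_mx 1.

Definition Nmx d (h : R) (J : 'M[R]_d) (sg : R) : 'M[R]_d :=
  1%:M + (h ^+ 2 * sg ^+ 2) *: (J *m J).

Definition Mmx s d (b : 'I_s -> R) (U : 'M[R]_(mhalf s))
  (sigma : 'I_(mhalf s) -> R) (h : R) (J : 'M[R]_d) : 'M[R]_d :=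
  1%:M - J *m ((h / 2) *: \sum_(i < mhalf s)
                  ((alpha b U i 0) ^+ 2 *: invmx (Nmx h J (sigma i)))).

Definition Rvec s d (b : 'I_s -> R) (U : 'M[R]_(mhalf s)) (V : 'M[R]_(s - mhalf s))
  (sigma : 'I_(mhalf s) -> R) (h : R) (J : 'M[R]_d) (r : 'cV[R]_(s * d))
  : 'cV[R]_(mhalf s * d) :=
  tensmx ((Q1 b U)^T *m Bmx b) (1%:M : 'M[R]_d) *m r
  + h *: (tensmx (Dmx sigma *m (Q2 b V)^T *m Bmx b) J *m r).

Definition blk n d (v : 'cV[R]_(n * d)) (i : 'I_n) : 'cV[R]_d :=
  \col_k v (mxtens_index (i, k)) 0.

Definition stack n d (W : 'I_n -> 'cV[R]_d) : 'cV[R]_(n * d) :=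
  \col_k W (mxtens_unindex k).1 (mxtens_unindex k).2 0.

Definition DeltaY s d (b : 'I_s -> R) (U : 'M[R]_(mhalf s)) (V : 'M[R]_(s - mhalf s))
  (sigma : 'I_(mhalf s) -> R) (h : R) (J : 'M[R]_d) (r : 'cV[R]_(s * d))
  : 'cV[R]_(s * d) :=
  let al := alpha b U in
  let Rv := Rvec b U V sigma h J r in
  let Ni i := Nmx h J (sigma i) in
  let M := Mmx b U sigma h J in
  let dz := invmx M *m (h *: (J *m \sum_(i < mhalf s)
                            (al i 0 *: (invmx (Ni i) *m blk Rv i)))) in
  let W i := invmx (Ni i) *m (blk Rv i + (al i 0 / 2) *: dz) in
  let W' := stack W in
  let W'' := - h *: (tensmx (Dmx sigma)^T J *m W')
             + tensmx ((Q2 b V)^T *m Bmx b) (1%:M : 'M[R]_d) *m r in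
  tensmx (Q1 b U) (1%:M : 'M[R]_d) *m W' + tensmx (Q2 b V) (1%:M : 'M[R]_d) *m W''.

End RKDefs.

(* Let W := B^(1/2) Abar B^(-1/2) and let rev_mx be the reversal permutation.
   Condition (i) says that W is skew-symmetric; condition (ii) says that
   rev_mx W rev_mx = -W and that B^(1/2) e is reversal invariant.  Since
   P1^T rev_mx = P1^T and P2^T rev_mx = -P2^T, this kills P1^T W P1, P2^T W P2 and
   P2^T B^(1/2) e.  As A = B^(-1/2) W B^(1/2) + e e^T B / 2, the basis Q = (Q1 Q2),
   whose inverse is Q^T B, brings A to [[alpha alpha^T / 2, D], [-D^T, 0]].  In
   these coordinates W'' is explicit in W', and block i of the remaining system
   reads N_i W_i - (h alpha_i / 2) J sum_j alpha_j W_j = R_i, where the coupling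
   vector h J sum_j alpha_j W_j is the solution Delta z of the Schur complement
   system with matrix M.  Solvability for every right-hand side makes the square
   system matrix invertible, whence uniqueness. *)

From mathcomp Require Import all_boot all_order all_algebra.
From mathcomp Require Import mxtens zify ring lra.
Set Implicit Arguments. Unset Strict Implicit. Unset Printing Implicit Defensive.
Import Order.TTheory GRing.Theory Num.Theory.
Local Open Scope ring_scope.

Lemma sum_nat_delta (R : pzSemiRingType) n (a : nat) (f : nat -> R) : (a < n)%N ->
  \sum_(k < n) (k == a :> nat)%:R * f k = f a.
Proof.
move=> lt_an; rewrite (bigD1 (Ordinal lt_an)) //= eqxx mul1r big1 ?addr0 // => k.
by rewrite -val_eqE => /negbTE ->; rewrite mul0r.
Qed.

Lemma sum_ord_split (V : nmodType) n m (f : nat -> V) : (m <= n)%N ->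
  \sum_(i < n) f i = \sum_(i < m) f i + \sum_(i < n - m) f (m + i)%N.
Proof.
move=> le_mn; rewrite -!(big_mkord xpredT) (big_cat_nat (leq0n m) le_mn) /=.
congr (_ + _); rewrite -{1}[m]add0n big_addn.
by rewrite big_mkord; apply: eq_bigr => i _; rewrite addnC.
Qed.

Section OrthogonalP.
Variable R : rcfType.
Implicit Types s : nat.

Definition inv_sqrt2 : R := Num.sqrt 2 / 2.

Lemma inv_sqrt2_sqr : inv_sqrt2 * inv_sqrt2 = 2^-1.
Proof. by rewrite /inv_sqrt2 mulrACA -expr2 sqr_sqrtr ?ler0n //; field. Qed.

Definition PT_revc s i : R :=
  if (i < s./2)%N then inv_sqrt2 else if (i < mhalf s)%N then 0 else inv_sqrt2.
Definition PT_diagc s i : R :=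
  if (i < s./2)%N then inv_sqrt2 else if (i < mhalf s)%N then 1 else - inv_sqrt2.

Lemma PTentryE s i k : PTentry R s i k =
  (k == (s.-1 - i)%N)%:R * PT_revc s i + (k == i)%:R * PT_diagc s i.
Proof.
rewrite /PTentry /PT_revc /PT_diagc -/inv_sqrt2.
case: ifP => _; first by ring.
by case: ifP => _; ring.
Qed.

Lemma PTentry_dot s i j : (i < s)%N -> (j < s)%N ->
  \sum_(k < s) PTentry R s i k * PTentry R s j k = (i == j)%:R.
Proof.
move=> lt_is lt_js.
under eq_bigr do rewrite [PTentry R s i _]PTentryE mulrDl -!mulrA.
rewrite big_split /= (sum_nat_delta (fun k => PT_revc s i * PTentry R s j k)); last by lia.
rewrite (sum_nat_delta (fun k => PT_diagc s i * PTentry R s j k)) //.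
rewrite !PTentryE.
rewrite (_ : (s.-1 - i == s.-1 - j)%N = (i == j)); last by apply/eqP/eqP; lia.
rewrite (_ : (i == s.-1 - j)%N = (s.-1 - i == j)%N); last by apply/eqP/eqP; lia.
have c2 := inv_sqrt2_sqr; rewrite /PT_revc /PT_diagc /mhalf.
case: (i =P j) => ?; case: ((s.-1 - i)%N =P j) => ?;
  case: (ltnP i s./2) => ?; case: (ltnP i s.+1./2) => ?;
  case: (ltnP j s./2) => ?; case: (ltnP j s.+1./2) => ?;
  rewrite /= ?mulr1n ?mulr0n; try (exfalso; lia); lra.
Qed.

Lemma PTentry_rev s i (j : 'I_s) : (i < s)%N ->
  PTentry R s i (rev_ord j) = (if (i < mhalf s)%N then 1 else -1) * PTentry R s i j.
Proof.
move=> lt_is; have := ltn_ord j; rewrite /PTentry /= => lt_js.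
rewrite (_ : (s - j.+1 == s.-1 - i)%N = (j == i :> nat)); last by apply/eqP/eqP; lia.
rewrite (_ : (s - j.+1 == i)%N = (j == (s.-1 - i)%N :> nat)); last by apply/eqP/eqP; lia.
rewrite /mhalf; case: (ltnP i s./2) => ?; case: (ltnP i s.+1./2) => ?;
  rewrite ?mul1r ?mulN1r; try (exfalso; lia).
- by rewrite addrC.
- by rewrite (_ : s.-1 - i = i)%N //; lia.
- by rewrite -mulrN opprB.
Qed.

Lemma mhalf_le s : (mhalf s <= s)%N.
Proof. by rewrite /mhalf; lia. Qed.

Lemma PTentry_col_dot s (k l : 'I_s) :
  \sum_(i < s) PTentry R s i k * PTentry R s i l = (k == l)%:R.
Proof.
set PT := \matrix_(i < s, j < s) PTentry R s i j.
have /mulmx1C/matrixP/(_ k l) : PT *m PT^T = 1%:M.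
  apply/matrixP => i j; rewrite !mxE -(PTentry_dot (ltn_ord i) (ltn_ord j)).
  by apply: eq_bigr => k' _; rewrite !mxE.
by rewrite !mxE => <-; apply: eq_bigr => i _; rewrite !mxE.
Qed.

Lemma P1P1T_add_P2P2T s : P1 R s *m P1T R s + P2 R s *m P2T R s = 1%:M.
Proof.
apply/matrixP => k l; rewrite !mxE -PTentry_col_dot.
rewrite (sum_ord_split (fun i => PTentry R s i k * PTentry R s i l) (mhalf_le s)).
by congr (_ + _); apply: eq_bigr => i _; rewrite !mxE.
Qed.

End OrthogonalP.

Section Reversal.
Variable R : pzRingType.

Definition rev_mx n : 'M[R]_n := \matrix_(i, j) (rev_ord i == j)%:R.
Arguments rev_mx {n}.

Lemma mul_rev_mx n p (M : 'M[R]_(n, p)) :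
  rev_mx *m M = \matrix_(i, j) M (rev_ord i) j.
Proof.
apply/matrixP => i j; rewrite !mxE (bigD1 (rev_ord i)) //= mxE eqxx mul1r.
by rewrite big1 ?addr0 // => k /negbTE; rewrite mxE eq_sym => ->; rewrite mul0r.
Qed.

Lemma mul_mx_rev n p (M : 'M[R]_(p, n)) :
  M *m rev_mx = \matrix_(i, j) M i (rev_ord j).
Proof.
apply/matrixP => i j; rewrite !mxE (bigD1 (rev_ord j)) //= mxE rev_ordK eqxx mulr1.
rewrite big1 ?addr0 // => k; rewrite mxE (can2_eq rev_ordK rev_ordK) => /negbTE ->.
by rewrite mulr0.
Qed.

Lemma tr_rev_mx n : (@rev_mx n)^T = rev_mx.
Proof. by apply/matrixP => i j; rewrite !mxE (can2_eq rev_ordK rev_ordK) eq_sym. Qed.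

End Reversal.
Arguments rev_mx {R n}.

Section ReversalParity.
Variable R : rcfType.
Variable s : nat.

Lemma P1T_rev : P1T R s *m rev_mx = P1T R s.
Proof.
rewrite mul_mx_rev; apply/matrixP => i j; rewrite !mxE PTentry_rev ?ltn_ord ?mul1r //.
exact: leq_trans (ltn_ord i) (mhalf_le s).
Qed.

Lemma P2T_rev : P2T R s *m rev_mx = - P2T R s.
Proof.
rewrite mul_mx_rev; apply/matrixP => i j; rewrite !mxE PTentry_rev.
- by rewrite ltnNge leq_addr mulN1r.
- by have := ltn_ord i; have := mhalf_le s; lia.
Qed.

Lemma rev_P1 : rev_mx *m P1 R s = P1 R s.
Proof. by rewrite /P1 -tr_rev_mx -trmx_mul P1T_rev. Qed.

Lemma rev_P2 : rev_mx *m P2 R s = - P2 R s.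
Proof. by rewrite /P2 -tr_rev_mx -trmx_mul P2T_rev linearN. Qed.

End ReversalParity.

Lemma eq_oppmx_eq0 (R : numDomainType) m n (X : 'M[R]_(m, n)) : X = - X -> X = 0.
Proof.
by move/matrixP=> eX; apply/matrixP => i j; apply/eqP; rewrite mxE -eqNr eq_sym {1}eX mxE.
Qed.

Section WeightedA.
Variable R : rcfType.
Variables (s : nat) (b : 'I_s -> R).
Hypothesis b_gt0 : forall i, 0 < b i.
Implicit Type A : 'M[R]_s.

Local Notation e := (const_mx 1 : 'cV[R]_s).

Let sqrt_b_neq0 i : Num.sqrt (b i) != 0.
Proof. by rewrite gt_eqF // sqrtr_gt0. Qed.

Let sqrt_b_sqr i : Num.sqrt (b i) * Num.sqrt (b i) = b i.
Proof. by rewrite -expr2 sqr_sqrtr // ltW. Qed.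

Lemma tr_Bisqrt : (Bisqrt b)^T = Bisqrt b. Proof. exact: tr_diag_mx. Qed.
Lemma tr_Bsqrt : (Bsqrt b)^T = Bsqrt b. Proof. exact: tr_diag_mx. Qed.

Lemma mulmx_Bisqrt_Bsqrt p (X : 'M[R]_(p, s)) : X *m Bisqrt b *m Bsqrt b = X.
Proof.
rewrite -mulmxA mulmx_diag -[RHS]mulmx1 -diag_const_mx; congr (_ *m diag_mx _).
by apply/matrixP => i j; rewrite !mxE mulVf.
Qed.

Lemma mulmx_Bsqrt_Bisqrt p (X : 'M[R]_(p, s)) : X *m Bsqrt b *m Bisqrt b = X.
Proof. by rewrite -mulmxA /Bsqrt /Bisqrt diag_mxC mulmxA mulmx_Bisqrt_Bsqrt. Qed.

Lemma mulmx_Bisqrt_B p (X : 'M[R]_(p, s)) : X *m Bisqrt b *m Bmx b = X *m Bsqrt b.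
Proof.
rewrite -mulmxA mulmx_diag; congr (_ *m diag_mx _); apply/matrixP => i j.
by rewrite !mxE -[X in _ * X]sqrt_b_sqr mulKf.
Qed.

Lemma mulmx_B_Bisqrt p (X : 'M[R]_(p, s)) : X *m Bmx b *m Bisqrt b = X *m Bsqrt b.
Proof. by rewrite -mulmxA /Bmx /Bisqrt diag_mxC mulmxA mulmx_Bisqrt_B. Qed.

Definition Wmx (A : 'M[R]_s) := Bsqrt b *m Abar A b *m Bisqrt b.

Lemma WmxE A i j :
  Wmx A i j = Num.sqrt (b i) * (A i j - b j / 2) / Num.sqrt (b j).
Proof. by rewrite /Wmx /Bsqrt /Bisqrt mul_diag_mx mul_mx_diag !mxE. Qed.

Lemma A_decomp A :
  A = Bisqrt b *m Wmx A *m Bsqrt b + 2^-1 *: (e *m (e^T *m Bmx b)).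
Proof.
rewrite /Wmx !mulmxA -{1}[Bisqrt b]mul1mx !mulmx_Bisqrt_Bsqrt mul1mx.
rewrite /Bmx mul_mx_diag; apply/matrixP => i j; rewrite !mxE big_ord1 !mxE.
lra.
Qed.

Lemma tr_Wmx A : (forall i j, b i * A i j + b j * A j i - b i * b j = 0) ->
  (Wmx A)^T = - Wmx A.
Proof.
move=> symplectic; apply/matrixP => i j; rewrite [LHS]mxE [RHS]mxE !WmxE.
have := symplectic i j; set x := Num.sqrt (b i); set y := Num.sqrt (b j).
rewrite -(sqrt_b_sqr i) -(sqrt_b_sqr j) -/x -/y => E.
by rewrite -[RHS]addr0 -(mul0r (x * y)^-1) -E; field; rewrite !sqrt_b_neq0.
Qed.

Lemma rev_Wmx_rev A : (forall i, b (rev_ord i) = b i) ->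
    (forall i j, b j = A (rev_ord i) (rev_ord j) + A i j) ->
  rev_mx *m Wmx A *m rev_mx = - Wmx A.
Proof.
move=> b_rev A_rev; rewrite mul_mx_rev; apply/matrixP => i j.
rewrite [LHS]mxE mul_rev_mx [LHS]mxE [RHS]mxE !WmxE !b_rev.
rewrite (_ : A (rev_ord i) (rev_ord j) = b j - A i j); last by rewrite (A_rev i j) addrK.
by field; apply: sqrt_b_neq0.
Qed.

Lemma rev_Bsqrt_e : (forall i, b (rev_ord i) = b i) ->
  rev_mx *m (Bsqrt b *m e) = Bsqrt b *m e.
Proof.
move=> b_rev; rewrite mul_rev_mx /Bsqrt mul_diag_mx.
by apply/matrixP => i j; rewrite !mxE b_rev.
Qed.

Lemma trQ_B_A_Q A p q (Pa : 'M_(s, p)) (Pb : 'M_(s, q)) (Xa : 'M_p) (Xb : 'M_q) :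
  (Bisqrt b *m Pa *m Xa)^T *m Bmx b *m (A *m (Bisqrt b *m Pb *m Xb)) =
  Xa^T *m (Pa^T *m Wmx A *m Pb) *m Xb
  + 2^-1 *: ((Xa^T *m (Pa^T *m (Bsqrt b *m e)))
               *m (Xb^T *m (Pb^T *m (Bsqrt b *m e)))^T).
Proof.
rewrite {1}(A_decomp A) !trmx_mul tr_Bisqrt tr_Bsqrt !trmxK.
rewrite mulmxDl mulmxDr -scalemxAl -scalemxAr; congr (_ + _ *: _); rewrite !mulmxA.
  by rewrite mulmx_Bisqrt_B !mulmx_Bsqrt_Bisqrt.
by rewrite mulmx_Bisqrt_B mulmx_B_Bisqrt.
Qed.

End WeightedA.

Lemma resolve_mx (R : pzRingType) n m1 m2 p (Q1 : 'M[R]_(n, m1)) (G1 : 'M_(m1, n))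
    (Q2 : 'M[R]_(n, m2)) (G2 : 'M_(m2, n)) (M : 'M_(n, p)) :
  Q1 *m G1 + Q2 *m G2 = 1%:M -> M = Q1 *m (G1 *m M) + Q2 *m (G2 *m M).
Proof. by move=> QG; rewrite !mulmxA -mulmxDl QG mul1mx. Qed.

Section SVDStructure.
Variable R : rcfType.
Variables (s : nat) (A : 'M[R]_s) (b : 'I_s -> R).
Variables (U : 'M[R]_(mhalf s)) (V : 'M[R]_(s - mhalf s)) (sigma : 'I_(mhalf s) -> R).
Hypothesis b_gt0 : forall i, 0 < b i.
Hypothesis symplectic : forall i j, b i * A i j + b j * A j i - b i * b j = 0.
Hypothesis b_rev : forall i, b (rev_ord i) = b i.
Hypothesis A_rev : forall i j, b j = A (rev_ord i) (rev_ord j) + A i j.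
Hypotheses (U_orth : U^T *m U = 1%:M) (V_orth : V^T *m V = 1%:M).
Hypothesis K_svd : Kmx A b = U *m Dmx sigma *m V^T.

Local Notation W := (Wmx b A).
Local Notation Bse := (Bsqrt b *m const_mx 1 : 'cV[R]_s).

Lemma Kmx_Wmx : Kmx A b = P1T R s *m W *m P2 R s.
Proof. by rewrite /Kmx /Wmx !mulmxA. Qed.

Lemma P1T_W_P1 : P1T R s *m W *m P1 R s = 0.
Proof.
apply: eq_oppmx_eq0.
have E : P1T R s *m rev_mx *m W *m (rev_mx *m P1 R s)
         = P1T R s *m (rev_mx *m W *m rev_mx) *m P1 R s by rewrite !mulmxA.
by rewrite P1T_rev rev_P1 rev_Wmx_rev // mulmxN mulNmx in E.
Qed.

Lemma P2T_W_P2 : P2T R s *m W *m P2 R s = 0.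
Proof.
apply: eq_oppmx_eq0.
have E : P2T R s *m rev_mx *m W *m (rev_mx *m P2 R s)
         = P2T R s *m (rev_mx *m W *m rev_mx) *m P2 R s by rewrite !mulmxA.
by rewrite P2T_rev rev_P2 rev_Wmx_rev // !(mulmxN, mulNmx) opprK in E.
Qed.

Lemma P2T_W_P1 : P2T R s *m W *m P1 R s = - (Kmx A b)^T.
Proof.
rewrite Kmx_Wmx trmx_mul [(_ *m W)^T]trmx_mul tr_Wmx // /P2 /P1 !trmxK.
by rewrite mulNmx mulmxN opprK mulmxA.
Qed.

Lemma P2T_Bse : P2T R s *m Bse = 0.
Proof.
apply: eq_oppmx_eq0.
have E : P2T R s *m rev_mx *m Bse = P2T R s *m (rev_mx *m Bse) by rewrite !mulmxA.
by rewrite P2T_rev rev_Bsqrt_e // mulNmx in E.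
Qed.

Local Notation Q1m := (Q1 b U).
Local Notation Q2m := (Q2 b V).
Local Notation G1 := ((Q1 b U)^T *m Bmx b).
Local Notation G2 := ((Q2 b V)^T *m Bmx b).

Lemma alphaE : alpha b U = U^T *m (P1T R s *m Bse).
Proof.
by rewrite /alpha /Q1 !trmx_mul tr_Bisqrt /P1 trmxK !mulmxA mulmx_Bisqrt_B.
Qed.

Lemma G1_A_Q1 : G1 *m (A *m Q1m) = 2^-1 *: (alpha b U *m (alpha b U)^T).
Proof. by rewrite /Q1 trQ_B_A_Q // /P1 trmxK P1T_W_P1 mulmx0 mul0mx add0r -alphaE. Qed.

Lemma G2_A_Q1 : G2 *m (A *m Q1m) = - (Dmx sigma)^T.
Proof.
rewrite /Q1 /Q2 trQ_B_A_Q // /P1 /P2 !trmxK P2T_Bse mulmx0 mul0mx scaler0 addr0.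
rewrite P2T_W_P1 K_svd !trmx_mul trmxK mulmxN mulNmx !mulmxA V_orth mul1mx.
by rewrite -mulmxA U_orth mulmx1.
Qed.

Lemma G1_A_Q2 : G1 *m (A *m Q2m) = Dmx sigma.
Proof.
rewrite /Q1 /Q2 trQ_B_A_Q // /P1 /P2 !trmxK P2T_Bse mulmx0 trmx0 mulmx0 scaler0.
by rewrite addr0 -Kmx_Wmx K_svd !mulmxA U_orth mul1mx -mulmxA V_orth mulmx1.
Qed.

Lemma G2_A_Q2 : G2 *m (A *m Q2m) = 0.
Proof.
rewrite /Q2 trQ_B_A_Q // /P2 !trmxK P2T_Bse P2T_W_P2 mulmx0 mul0mx.
by rewrite mulmx0 mul0mx scaler0 addr0.
Qed.

Lemma Q_G_sum : Q1m *m G1 + Q2m *m G2 = 1%:M.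
Proof.
have QG p (P : 'M[R]_(s, p)) (X : 'M[R]_p) : X *m X^T = 1%:M ->
    (Bisqrt b *m P *m X) *m ((Bisqrt b *m P *m X)^T *m Bmx b)
    = Bisqrt b *m (P *m P^T) *m Bsqrt b.
  move=> X_orth; rewrite !trmx_mul tr_Bisqrt !mulmxA mulmx_Bisqrt_B //.
  by rewrite -(mulmxA _ X) X_orth mulmx1.
rewrite /Q1 /Q2 !QG; try exact: mulmx1C.
rewrite -mulmxDl -mulmxDr /P1 /P2 !trmxK P1P1T_add_P2P2T mulmx1.
by rewrite -[Bisqrt b]mul1mx mulmx_Bisqrt_Bsqrt.
Qed.

Lemma A_Q1 :
  A *m Q1m = Q1m *m (2^-1 *: (alpha b U *m (alpha b U)^T)) - Q2m *m (Dmx sigma)^T.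
Proof. by rewrite (resolve_mx (A *m Q1m) Q_G_sum) G1_A_Q1 G2_A_Q1 mulmxN. Qed.

Lemma A_Q2 : A *m Q2m = Q1m *m Dmx sigma.
Proof. by rewrite (resolve_mx (A *m Q2m) Q_G_sum) G1_A_Q2 G2_A_Q2 mulmx0 addr0. Qed.

End SVDStructure.

Lemma Dmx_mul_tr (R : rcfType) s (sigma : 'I_(mhalf s) -> R) :
    (forall i : 'I_(mhalf s), (s - mhalf s <= i)%N -> sigma i = 0) ->
  Dmx sigma *m (Dmx sigma)^T = diag_mx (\row_i sigma i ^+ 2).
Proof.
move=> sigma0; apply/matrixP => i j; rewrite !mxE.
under eq_bigr do rewrite !mxE.
case: (ltnP i (s - mhalf s)) => [lt_i|ge_i]; last first.
  by rewrite sigma0 // expr0n mul0rn big1 // => k _; case: eqP; rewrite ?mul0r //; lia.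
rewrite (bigD1 (Ordinal lt_i)) //= eqxx big1 ?addr0 => [|k]; last first.
  by rewrite -val_eqE /= eq_sym => /negbTE ->; rewrite mul0r.
case: (i =P j) => [<-|ne]; first by rewrite eqxx expr2.
by rewrite mulr0n ifF ?mulr0 //; apply/eqP => /val_inj eq_ji; apply: ne.
Qed.

Section Tensor.
Variable R : pzRingType.

Lemma tensmxDl m n p q (X Y : 'M[R]_(m, n)) (Z : 'M[R]_(p, q)) :
  (X + Y) *t Z = X *t Z + Y *t Z.
Proof. by apply/matrixP => i j; rewrite !mxE mulrDl. Qed.

Lemma tensmxNl m n p q (X : 'M[R]_(m, n)) (Z : 'M[R]_(p, q)) :
  (- X) *t Z = - (X *t Z).
Proof. by apply/matrixP => i j; rewrite !mxE mulNr. Qed.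

Lemma tensmxZl m n p q c (X : 'M[R]_(m, n)) (Z : 'M[R]_(p, q)) :
  (c *: X) *t Z = c *: (X *t Z).
Proof. by apply/matrixP => i j; rewrite !mxE mulrA. Qed.

Lemma tensmx11 m n : (1%:M : 'M[R]_m) *t (1%:M : 'M[R]_n) = 1%:M.
Proof.
apply/matrixP => i j.
case: (mxtens_indexP i) => i1 i2; case: (mxtens_indexP j) => j1 j2.
rewrite tensmxE !mxE (inj_eq (can_inj (@mxtens_indexK m n))) xpair_eqE.
by case: (i1 == j1); case: (i2 == j2); rewrite ?mulr1 ?mulr0 ?mul0r.
Qed.

Lemma sum_mxtens m n (F : 'I_(m * n) -> R) :
  \sum_(k < m * n) F k = \sum_(i < m) \sum_(j < n) F (mxtens_index (i, j)).
Proof.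
rewrite pair_big /= (reindex (@mxtens_index m n)) /=; first by apply: eq_bigr => -[].
by exists (@mxtens_unindex m n) => k _; rewrite (mxtens_indexK, mxtens_unindexK).
Qed.

End Tensor.

Section BlockVectors.
Variable R : rcfType.
Variables (n d : nat).
Implicit Types v w : 'cV[R]_(n * d).

Lemma blk_ext v w : (forall i, blk v i = blk w i) -> v = w.
Proof.
move=> eq_blk; apply/matrixP => k z; rewrite [z]ord1.
by case: (mxtens_indexP k) => i j; have /matrixP/(_ j 0) := eq_blk i; rewrite !mxE.
Qed.

Lemma blk_stack (W : 'I_n -> 'cV[R]_d) i : blk (stack W) i = W i.
Proof. by apply/matrixP => k z; rewrite [z]ord1 !mxE mxtens_indexK. Qed.

Lemma blkD v w i : blk (v + w) i = blk v i + blk w i.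
Proof. by apply/matrixP => k z; rewrite !mxE. Qed.

Lemma blkN v i : blk (- v) i = - blk v i.
Proof. by apply/matrixP => k z; rewrite !mxE. Qed.

Lemma blkZ c v i : blk (c *: v) i = c *: blk v i.
Proof. by apply/matrixP => k z; rewrite !mxE. Qed.

Lemma blk_tens m (X : 'M[R]_(m, n)) (Y : 'M[R]_d) v i :
  blk (X *t Y *m v) i = \sum_j X i j *: (Y *m blk v j).
Proof.
apply/matrixP => k z; rewrite [z]ord1 !mxE sum_mxtens summxE.
apply: eq_bigr => j _; rewrite !mxE mulr_sumr; apply: eq_bigr => l _.
by rewrite tensmxE !mxE mulrA.
Qed.

Lemma blk_tens_rank1 m (u : 'cV[R]_m) (w : 'cV[R]_n) (Y : 'M[R]_d) v i :
  blk ((u *m w^T) *t Y *m v) i = u i 0 *: (Y *m \sum_j (w j 0 *: blk v j)).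
Proof.
rewrite blk_tens mulmx_sumr scaler_sumr; apply: eq_bigr => j _.
by rewrite !mxE big_ord1 !mxE -scalemxAr scalerA.
Qed.

Lemma blk_tens_diag (c : 'rV[R]_n) (Y : 'M[R]_d) v i :
  blk (diag_mx c *t Y *m v) i = c 0 i *: (Y *m blk v i).
Proof.
rewrite blk_tens (bigD1 i) //= big1 ?addr0 => [|j]; first by rewrite mxE eqxx mulr1n.
by rewrite mxE eq_sym => /negbTE ->; rewrite mulr0n scale0r.
Qed.

End BlockVectors.

Section ReducedSystem.
Variable R : rcfType.
Variables (m d : nat) (al : 'cV[R]_m) (sigma : 'I_m -> R) (h : R) (J : 'M[R]_d).

(* The system for W' left after the change of basis by Q and elimination of W''. *)
Definition reduced_mx : 'M[R]_(m * d) :=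
  1%:M - h *: ((2^-1 *: (al *m al^T)) *t J)
  + h ^+ 2 *: (diag_mx (\row_i sigma i ^+ 2) *t (J *m J)).

Definition schur_mx : 'M[R]_d :=
  1%:M - J *m ((h / 2) *: \sum_i (al i 0 ^+ 2 *: invmx (Nmx h J (sigma i)))).

Definition schur_rhs (Rv : 'cV[R]_(m * d)) : 'cV[R]_d :=
  h *: (J *m \sum_i (al i 0 *: (invmx (Nmx h J (sigma i)) *m blk Rv i))).

Definition reduced_block Rv i : 'cV[R]_d :=
  invmx (Nmx h J (sigma i))
    *m (blk Rv i + (al i 0 / 2) *: (invmx schur_mx *m schur_rhs Rv)).

Definition reduced_solution Rv : 'cV[R]_(m * d) := stack (reduced_block Rv).

Hypothesis N_unit : forall i, Nmx h J (sigma i) \in unitmx.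
Hypothesis schur_unit : schur_mx \in unitmx.

Lemma schur_sum_block Rv :
  h *: (J *m \sum_j (al j 0 *: reduced_block Rv j)) = invmx schur_mx *m schur_rhs Rv.
Proof.
set z := invmx schur_mx *m schur_rhs Rv.
set S := \sum_(i < m) (al i 0 ^+ 2 *: invmx (Nmx h J (sigma i))).
have -> : \sum_j (al j 0 *: reduced_block Rv j)
    = \sum_j (al j 0 *: (invmx (Nmx h J (sigma j)) *m blk Rv j)) + 2^-1 *: (S *m z).
  rewrite mulmx_suml scaler_sumr -big_split; apply: eq_bigr => j _.
  rewrite /reduced_block mulmxDr -scalemxAr scalerDr -scalemxAl !scalerA.
  by congr (_ + _ *: _); rewrite /=; ring.
have schur_z : schur_mx *m z = schur_rhs Rv by rewrite mulKVmx.
rewrite mulmxDr scalerDr -[X in X + _]/(schur_rhs Rv) -schur_z.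
suff -> : h *: (J *m (2^-1 *: (S *m z))) = z - schur_mx *m z by rewrite addrC subrK.
rewrite /schur_mx mulmxBl mul1mx opprB addrC subrK.
by rewrite -/S -mulmxA -scalemxAl -!scalemxAr scalerA.
Qed.

Lemma reduced_solutionP Rv : reduced_mx *m reduced_solution Rv = Rv.
Proof.
apply: blk_ext => i.
rewrite /reduced_mx !mulmxDl mul1mx mulNmx -!scalemxAl !(blkD, blkN, blkZ).
rewrite tensmxZl -scalemxAl blkZ.
rewrite blk_tens_rank1 blk_tens_diag /reduced_solution blk_stack.
under eq_bigr do rewrite blk_stack.
rewrite mxE (_ : h *: _
    = (al i 0 / 2) *: (h *: (J *m \sum_j (al j 0 *: reduced_block Rv j)))).
  2: by rewrite !scalerA; congr (_ *: _); ring.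
rewrite schur_sum_block scalerA.
have := mulKVmx (N_unit i) (blk Rv i + (al i 0 / 2) *: (invmx schur_mx *m schur_rhs Rv)).
rewrite -/(reduced_block Rv i) /Nmx mulmxDl mul1mx -scalemxAl => N_block.
by rewrite addrAC N_block addrK.
Qed.

End ReducedSystem.

Section BlockElimination.
Variable R : rcfType.
Variables (s m n d : nat) (A : 'M[R]_s).
Variables (Q1 : 'M[R]_(s, m)) (Q2 : 'M[R]_(s, n)) (G1 : 'M[R]_(m, s)) (G2 : 'M[R]_(n, s)).
Variables (D : 'M[R]_(m, n)) (al : 'cV[R]_m) (sigma : 'I_m -> R) (h : R) (J : 'M[R]_d).
Hypothesis QG : Q1 *m G1 + Q2 *m G2 = 1%:M.
Hypothesis AQ1 : A *m Q1 = Q1 *m (2^-1 *: (al *m al^T)) - Q2 *m D^T.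
Hypothesis AQ2 : A *m Q2 = Q1 *m D.
Hypothesis DDt : D *m D^T = diag_mx (\row_i sigma i ^+ 2).

Local Notation Id := (1%:M : 'M[R]_d).

Lemma block_solve (r : 'cV[R]_(s * d)) (W1 : 'cV[R]_(m * d)) :
    reduced_mx al sigma h J *m W1 = G1 *t Id *m r + h *: ((D *m G2) *t J *m r) ->
  let W2 := - h *: (D^T *t J *m W1) + G2 *t Id *m r in
  (1%:M *t Id - h *: (A *t J)) *m (Q1 *t Id *m W1 + Q2 *t Id *m W2) = r.
Proof.
move=> reduced_W1 W2; set T := row_mx (Q1 *t Id) (Q2 *t Id).
have T_G : T *m col_mx (G1 *t Id) (G2 *t Id) = 1%:M.
  by rewrite mul_row_col !tensmx_mul mulmx1 -tensmxDl QG tensmx11.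
have AJ_T : A *t J *m T
    = T *m block_mx ((2^-1 *: (al *m al^T)) *t J) (D *t J) (- (D^T *t J)) 0.
  rewrite mul_mx_row mul_row_block !tensmx_mul !mulmx1 !mul1mx mulmx0 addr0.
  by rewrite AQ1 AQ2 tensmxDl tensmxNl mulmxN tensmx_mul mul1mx.
transitivity (T *m (col_mx (G1 *t Id) (G2 *t Id) *m r)); last first.
  by rewrite mulmxA T_G mul1mx.
rewrite -mul_row_col -/T mulmxA mulmxBl tensmx11 mul1mx -scalemxAl AJ_T.
rewrite scalemxAr -[T in T - _]mulmx1 -mulmxBr -mulmxA; congr (T *m _).
rewrite mulmxBl mul1mx -scalemxAl mul_block_col mul_col_mx.
rewrite scale_col_mx opp_col_mx add_col_mx.
congr col_mx; last first.
  by rewrite mul0mx addr0 mulNmx scalerN opprK /W2 scaleNr addrAC addNr add0r.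
rewrite /W2 mulmxDr -scalemxAr !mulmxA !tensmx_mul mulmx1 DDt.
move: reduced_W1; rewrite /reduced_mx !mulmxDl mul1mx mulNmx -!scalemxAl.
move/esym/(canRL (addrK _)) => ->.
by rewrite !scalerDr scaleNr scalerN scalerA -expr2 !opprD opprK !addrA.
Qed.

End BlockElimination.

Lemma solution_unique (R : fieldType) n (S : 'M[R]_n) (f : 'cV[R]_n -> 'cV[R]_n) :
  (forall r, S *m f r = r) -> forall r Y, S *m Y = r -> Y = f r.
Proof.
move=> Sf r Y SY.
have S_unit : S \in unitmx.
  suff /mulmx1_unit[] : S *m \matrix_(i, k) f (delta_mx k 0) i 0 = 1%:M by [].
  apply/matrixP => i k; move: (Sf (delta_mx k 0)) => /matrixP/(_ i 0).
  by rewrite !mxE eqxx andbT => <-; apply: eq_bigr => j _; rewrite mxE.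
by rewrite -(mulKmx S_unit Y) SY -{1}(Sf r) mulKmx.
Qed.

Theorem mainTheorem2 (R : rcfType) (s d : nat) (A : 'M[R]_s) (b : 'I_s -> R)
  (U : 'M[R]_(mhalf s)) (V : 'M[R]_(s - mhalf s)) (sigma : 'I_(mhalf s) -> R)
  (h : R) (J : 'M[R]_d) (r : 'cV[R]_(s * d)) :
  (0 < s)%N ->
  (forall i, 0 < b i) ->
  (* (i) symplecticity *)
  (forall i j, b i * A i j + b j * A j i - b i * b j = 0) ->
  (* (ii) symmetry *)
  (forall i, b (rev_ord i) = b i) ->
  (forall i j, b j = A (rev_ord i) (rev_ord j) + A i j) ->
  (* K = U D V^T is a singular value decomposition *)
  U^T *m U = 1%:M -> V^T *m V = 1%:M ->
  (forall i : 'I_(mhalf s), (i < s - mhalf s)%N -> 0 <= sigma i) ->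
  (forall i : 'I_(mhalf s), (s - mhalf s <= i)%N -> sigma i = 0) ->
  Kmx A b = U *m Dmx sigma *m V^T ->
  (* invertibility hypotheses *)
  (forall i, Nmx h J (sigma i) \in unitmx) ->
  Mmx b U sigma h J \in unitmx ->
  let DY := DeltaY b U V sigma h J r in
  let S := tensmx (1%:M : 'M[R]_s) (1%:M : 'M[R]_d) - h *: tensmx A J in
  S *m DY = r /\ (forall Y : 'cV[R]_(s * d), S *m Y = r -> Y = DY).
Proof.
move=> _ b_gt0 symplectic b_rev A_rev U_orth V_orth _ sigma0 K_svd N_unit M_unit DY S.
have QG := Q_G_sum b_gt0 U_orth V_orth.
have AQ1 := A_Q1 b_gt0 symplectic b_rev A_rev U_orth V_orth K_svd.
have AQ2 := A_Q2 b_gt0 b_rev A_rev U_orth V_orth K_svd.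
have solves r' : S *m DeltaY b U V sigma h J r' = r'.
  apply: (block_solve QG AQ1 AQ2 (Dmx_mul_tr sigma0)
            (W1 := reduced_solution (alpha b U) sigma h J (Rvec b U V sigma h J r'))).
  by rewrite [Dmx sigma *m _]mulmxA; apply: reduced_solutionP.
by split => [|Y]; [exact: solves | exact: solution_unique solves r Y].
Qed.
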